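(* Let $n$ be an integer and let $V$ be a finite dimensional graded vector space concentrated in degrees $\geq2$. Let $\gamma\in\mathrm{GC}_{V,n}$ be a graph of loop order $g$ with $D$ decorations in $V^*$. Then the cohomological degree of $\gamma$ satisfies \[|\gamma|\leq-(n-3)(g-1)-D+1.\] In particular, if $n\geq4$ and $g\geq1$ then $|\gamma|\leq0$.
   Context: $\mathrm{GC}_{V,n}$ is spanned by connected graphs without hairs, with $v\ge1$ vertices and $e$ edges (loop order $g=e-v+1$), each vertex carrying a (possibly empty) monomial of decorations from $V^*$ (an element of $(V^k)^*$ having degree $-k$), such that every vertex is at least trivalent where each decoration at it counts $+1$ to its valence. The cohomological degree of such a graph in $\mathrm{GC}_{V,n}$ is $|\gamma|=nv-(n-1)e+(\text{total degree of the decorations})+1$. *)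

From mathcomp Require Import all_boot all_order all_algebra.
Unset Strict Implicit. Unset Printing Implicit Defensive.
Import Order.TTheory GRing.Theory Num.Theory.
Local Open Scope ring_scope.

(* A graded vector space V is recorded by its graded dimension:
   dimV k = dim V^k.  Decorations are elements of (V^k)^*, of degree -k;
   for the degree count only the degree k of each decoration matters. *)
Definition finite_graded (dimV : int -> nat) : Prop :=
  exists N : nat, forall k : int, (N%:Z < `|k|%:Z) -> dimV k = 0%N.

Definition concentrated_ge2 (dimV : int -> nat) : Prop :=
  forall k : int, dimV k <> 0%N -> 2 <= k.

(* Hairless decorated (multi)graph: vertices 'I_nv, edges a list of
   (unordered, stored as ordered) pairs of vertices (multiple edges and
   loops allowed), decorations at each vertex: the list of degrees k of
   the V^* decorations (a decoration of V^k-dual type, of degree -k). *)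
Record dgraph := DGraph {
  nv : nat;
  edges : seq ('I_nv * 'I_nv);
  deco : 'I_nv -> seq int }.

Definition ne (G : dgraph) : nat := size (edges G).

Definition gc_adj (G : dgraph) : rel 'I_(nv G) :=
  fun x y => has (fun p => (p == (x, y)) || (p == (y, x))) (edges G).

Definition gc_connected (G : dgraph) : Prop :=
  forall x y : 'I_(nv G), connect (gc_adj G) x y.

Definition valence (G : dgraph) (x : 'I_(nv G)) : nat :=
  (count (fun p => p.1 == x) (edges G) + count (fun p => p.2 == x) (edges G))%N.

Definition is_GC_graph (dimV : int -> nat) (G : dgraph) : Prop :=
  [/\ (1 <= nv G)%N, gc_connected G,
      forall x, (3 <= valence G x + size (deco G x))%N
    & forall x k, k \in deco G x -> dimV k <> 0%N].

Definition num_deco (G : dgraph) : nat := (\sum_(x < nv G) size (deco G x))%N.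

Definition deco_degree (G : dgraph) : int :=
  \sum_(x < nv G) \sum_(k <- deco G x) (- k).

Definition loop_order (G : dgraph) : int := (ne G)%:Z - (nv G)%:Z + 1.

Definition gc_degree (n : int) (G : dgraph) : int :=
  n * (nv G)%:Z - (n - 1) * (ne G)%:Z + deco_degree G + 1.

From mathcomp Require Import all_boot all_order all_algebra.
From mathcomp Require Import zify ring.
Import Order.TTheory GRing.Theory Num.Theory.
Local Open Scope ring_scope.

(* Counting half-edges, trivalence gives 3v <= 2e + D, and each decoration
   has degree at most -2, so the decorations contribute at most -2D.  The
   bound then follows from the identity
     |gamma| = -(n-3)(g-1) - D + 1 - (2e + D - 3v) + (deg + 2D).
   For the second claim, g = 1 means e = v, so trivalence forces D >= v >= 1. *)

Lemma sum_count_eq_size (T : finType) (U : Type) (f : U -> T) (s : seq U) :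
  (\sum_(x : T) count (fun p => f p == x) s = size s)%N.
Proof.
rewrite -sum1_size (partition_big f predT) //=.
by apply: eq_bigr => x _; rewrite sum1_count.
Qed.

Lemma sum_valence (G : dgraph) : (\sum_(x < nv G) valence G x = 2 * ne G)%N.
Proof. by rewrite big_split /= !sum_count_eq_size mul2n addnn. Qed.

Lemma sum_ge_const (R : numDomainType) (a : R) (s : seq R) :
  (forall k, k \in s -> a <= k) -> a *+ size s <= \sum_(k <- s) k.
Proof.
move=> ge_a; rewrite -[size s]count_predT -iter_addr_0 -big_const_seq.
by rewrite big_seq [leRHS]big_seq; apply: ler_sum.
Qed.

Lemma deco_degree_le (G : dgraph) :
  (forall x k, k \in deco G x -> 2 <= k) ->
  deco_degree G <= - 2 * (num_deco G)%:Z.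
Proof.
move=> deco_ge2; rewrite /deco_degree /num_deco.
under eq_bigr do rewrite sumrN.
rewrite sumrN mulNr lerN2 -natz natr_sum mulr_sumr.
apply: ler_sum => x _; rewrite mulr_natr.
exact/sum_ge_const/deco_ge2.
Qed.

Lemma three_nv_le (G : dgraph) :
  (forall x, 3 <= valence G x + size (deco G x))%N ->
  (3 * nv G <= 2 * ne G + num_deco G)%N.
Proof.
move=> trivalent; rewrite -sum_valence -big_split /=.
rewrite mulnC -[X in (X * 3)%N]card_ord -sum_nat_const.
exact: leq_sum.
Qed.

Lemma gc_degree_le (n : int) (G : dgraph) :
  deco_degree G <= - 2 * (num_deco G)%:Z ->
  (3 * nv G <= 2 * ne G + num_deco G)%N ->
  gc_degree n G <= - (n - 3) * (loop_order G - 1) - (num_deco G)%:Z + 1.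
Proof.
rewrite /gc_degree /loop_order.
move: (deco_degree G) (nv G) (ne G) (num_deco G) => deg v e D deg_le v_le.
have -> : n * v%:Z - (n - 1) * e%:Z + deg + 1 =
    - (n - 3) * (e%:Z - v%:Z + 1 - 1) - D%:Z + 1
    - (2 * e%:Z + D%:Z - 3 * v%:Z) + (deg + 2 * D%:Z) by ring.
lia.
Qed.

Theorem lemma13p5 (n : int) (dimV : int -> nat)
  (hfin : finite_graded dimV) (hge2 : concentrated_ge2 dimV)
  (G : dgraph) (hG : is_GC_graph dimV G) :
  gc_degree n G <= - (n - 3) * (loop_order G - 1) - (num_deco G)%:Z + 1
  /\ (4 <= n -> 1 <= loop_order G -> gc_degree n G <= 0).
Proof.
case: hG => nv_gt0 _ trivalent deco_dimV.
have v_le := three_nv_le _ trivalent.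
have deg_le : deco_degree G <= - 2 * (num_deco G)%:Z.
  by apply: deco_degree_le => x k /deco_dimV /hge2.
have bound := gc_degree_le n _ deg_le v_le.
split=> // n_ge4 g_ge1; apply: le_trans bound _.
have [g1 | g_ge2] : loop_order G = 1 \/ 2 <= loop_order G by lia.
- have D_gt0 : (0 < num_deco G)%N by move: g1 v_le; rewrite /loop_order; lia.
  by rewrite g1 subrr mulr0 add0r; lia.
- by nia.
Qed.
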